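(* Let $n,m,q,L\ge 1$ and let $X\in\mathbb{R}^{n\times L}$, $U\in\mathbb{R}^{m\times L}$, $V\in\mathbb{R}^{q\times L}$, $E\in\mathbb{R}^{n\times q}$, $\mathcal{D}_{11}\in\mathbb{R}^{L\times L}$ be given, and let $\Sigma=\{(A,B)\in\mathbb{R}^{n\times n}\times\mathbb{R}^{n\times m}: X\mathcal{D}_{11}=AX+BU+EV\}$, assumed nonempty. Then the data $(X,U)$ are informative for stabilization (there exists $K\in\mathbb{R}^{m\times n}$ such that $A+BK$ is Hurwitz for all $(A,B)\in\Sigma$) if and only if there exists $\theta\in\mathbb{R}^{L\times n}$ with $X\theta=(X\theta)^{T}>0$ and $\theta^{T}(X\mathcal{D}_{11}-EV)^{T}+(X\mathcal{D}_{11}-EV)\theta<0$. Furthermore, for such $\theta$ the gain $K=U\theta(X\theta)^{-1}$ (which equals $UX^{+}$ with the right inverse $X^{+}=\theta(X\theta)^{-1}$ of $X$) makes $A+BK$ Hurwitz for all $(A,B)\in\Sigma$.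
   Context: The data arise from an agent $\dot x=\bar Ax+\bar Bu+Ev$ with unknown $(\bar A,\bar B)$ and known $E$, where $X,U,V$ collect the first $L$ coefficients of $x,u,v$ in a (Chebyshev) orthogonal polynomial basis and $\mathcal{D}_{11}$ is the leading $L\times L$ block of the basis differentiation matrix; in the noise-free case $(\bar A,\bar B)\in\Sigma$. Hurwitz means all eigenvalues have negative real part; $>0$ / $<0$ denote positive / negative definiteness of symmetric matrices. *)

From HB Require Import structures.
From mathcomp Require Import all_boot all_order all_algebra.
From mathcomp Require Import reals.
From mathcomp.real_closed Require Import complex.
Set Implicit Arguments. Unset Strict Implicit. Unset Printing Implicit Defensive.
Import Order.TTheory GRing.Theory Num.Theory.
Local Open Scope ring_scope.

Definition hurwitz (R : realType) (n : nat) (A : 'M[R]_n) : Prop :=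
  forall z : R[i], eigenvalue (map_mx (real_complex R) A) z -> complex.Re z < 0.

Definition posdef (R : realType) (n : nat) (M : 'M[R]_n) : Prop :=
  M^T = M /\ forall x : 'cV[R]_n, x != 0 -> 0 < (x^T *m M *m x) 0 0.

Definition negdef (R : realType) (n : nat) (M : 'M[R]_n) : Prop :=
  M^T = M /\ forall x : 'cV[R]_n, x != 0 -> (x^T *m M *m x) 0 0 < 0.

Definition Sigma (R : realType) (n m q L : nat)
  (X : 'M[R]_(n, L)) (U : 'M[R]_(m, L)) (V : 'M[R]_(q, L))
  (E : 'M[R]_(n, q)) (D11 : 'M[R]_L) (A : 'M[R]_n) (B : 'M[R]_(n, m)) : Prop :=
  X *m D11 = A *m X + B *m U + E *m V.

Definition informative_stab (R : realType) (n m q L : nat)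
  (X : 'M[R]_(n, L)) (U : 'M[R]_(m, L)) (V : 'M[R]_(q, L))
  (E : 'M[R]_(n, q)) (D11 : 'M[R]_L) : Prop :=
  exists K : 'M[R]_(m, n), forall A B,
    Sigma X U V E D11 A B -> hurwitz (A + B *m K).

(* For (A, B) in Sigma we have A X + B U = Y with Y := X D11 - E V, so a gain
   K = U G with X G = I yields the closed loop A + B K = Y G, the same for all
   of Sigma.  Conversely, if A + B K is Hurwitz, hence has negative trace, on
   all of Sigma, then [I; K] lies in the column space of [X; U]: otherwise
   Sigma contains a line along which the trace of A + B K is unbounded.  So
   informativity means that Y G is Hurwitz for some right inverse G of X, and
   by Lyapunov's theorem that (Y G) P + P (Y G)^T < 0 for some P > 0, which is
   the LMI for theta = G P (then P = X theta).  The converse Lyapunov theorem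
   is proved algebraically: conjugating a complex Schur form of the Hurwitz
   matrix M by diag(eps^i), eps small, gives F M F^-1 with negative definite
   Hermitian part, and P := Re (F^-1 F^-H) is then a Lyapunov matrix. *)

From mathcomp Require Import all_boot all_order all_algebra.
From mathcomp Require Import reals.
From mathcomp.real_closed Require Import complex.
From mathcomp Require Import ring lra.
Import Order.TTheory GRing.Theory Num.Theory.
Local Open Scope ring_scope.
Set Implicit Arguments. Unset Strict Implicit. Unset Printing Implicit Defensive.

Section RealMatrices.
Variable R : realType.

Lemma posdef_row_gt0 n (P : 'M[R]_n) :
  posdef P -> forall a : 'rV_n, a != 0 -> 0 < (a *m P *m a^T) 0 0.
Proof. by case=> _ Ppos a; have := Ppos a^T; rewrite trmxK trmx_eq0. Qed.

Lemma negdef_row_lt0 n (N : 'M[R]_n) :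
  negdef N -> forall a : 'rV_n, a != 0 -> (a *m N *m a^T) 0 0 < 0.
Proof. by case=> _ Nneg a; have := Nneg a^T; rewrite trmxK trmx_eq0. Qed.

Lemma posdef_unitmx n (P : 'M[R]_n) : posdef P -> P \in unitmx.
Proof.
move=> Ppos; apply: contraT => P_nonunit.
have /eigenvalueP [v vP v_neq0] : eigenvalue P 0.
  by rewrite /eigenvalue /eigenspace raddf0 subr0 kermx_eq0 row_free_unit.
by have := posdef_row_gt0 Ppos v_neq0; rewrite vP scale0r mul0mx mxE ltxx.
Qed.

Lemma mxtrace_mul_trmx_gt0 p q (A : 'M[R]_(p, q)) :
  A != 0 -> 0 < \tr (A *m A^T).
Proof.
case/matrix0Pn => i [j Aij_neq0].
have -> : \tr (A *m A^T) = \sum_k \sum_l A k l ^+ 2.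
  by apply: eq_bigr => k _; rewrite mxE; apply: eq_bigr => l _; rewrite mxE.
have sum_sq_ge0 (P : pred 'I_q) k : 0 <= \sum_(l | P l) A k l ^+ 2.
  by rewrite sumr_ge0 // => l _; rewrite sqr_ge0.
rewrite (bigD1 i) //= (bigD1 j) //= -addrA ltr_wpDr ?exprn_even_gt0 //.
by rewrite addr_ge0 ?sum_sq_ge0 // sumr_ge0.
Qed.

Lemma gain_factors_through_data n m L (X : 'M[R]_(n, L)) (U : 'M[R]_(m, L))
    (Y : 'M[R]_(n, L)) (K : 'M[R]_(m, n)) A0 B0 :
  A0 *m X + B0 *m U = Y ->
  (forall A B, A *m X + B *m U = Y -> \tr (A + B *m K) < 0) ->
  exists2 G : 'M[R]_(L, n), X *m G = 1%:M & U *m G = K.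
Proof.
move=> data0 trace_lt0.
suff /submxP [G] : (row_mx 1%:M K^T <= row_mx X^T U^T)%MS.
  rewrite mul_mx_row => /eq_row_mx [XG UG]; exists G^T.
    by rewrite -[X]trmxK -trmx_mul -XG trmx1.
  by rewrite -[U]trmxK -trmx_mul -UG trmxK.
(* otherwise [W1^T W2^T] annihilates [X; U] but S := W1 + K^T W2 != 0, and
   (A0, B0) + t S (W1^T, W2^T) stays consistent while A + B K gains t S S^T *)
rewrite submxE; apply: contraT => S_neq0.
have := mulmx_coker (row_mx X^T U^T); set W := cokermx _ in S_neq0 *.
rewrite -[W]vsubmxK !mul_row_col mul1mx in S_neq0 *.
set W1 := usubmx W in S_neq0 *; set W2 := dsubmx W in S_neq0 *.
set S := W1 + K^T *m W2 in S_neq0.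
move=> /(congr1 trmx); rewrite raddfD /= !trmx_mul !trmxK trmx0 => W_data.
have ST : S^T = W1^T + W2^T *m K by rewrite raddfD /= trmx_mul trmxK.
set t := - \tr (A0 + B0 *m K) / \tr (S *m S^T).
have data_t : (A0 + (t *: S) *m W1^T) *m X + (B0 + (t *: S) *m W2^T) *m U = Y.
  by rewrite !mulmxDl addrACA data0 -!mulmxA -mulmxDr W_data mulmx0 addr0.
have := trace_lt0 _ _ data_t.
rewrite mulmxDl -mulmxA addrACA -mulmxDr -ST mxtraceD -scalemxAl mxtraceZ.
rewrite /t divfK ?subrr ?ltxx //.
by rewrite gt_eqF // mxtrace_mul_trmx_gt0.
Qed.

End RealMatrices.

Lemma eigenvalue_trig_diag (F : fieldType) n (T : 'M[F]_n) i :
  is_trig_mx T -> eigenvalue T (T i i).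
Proof.
move=> Ttrig; rewrite eigenvalue_root_char char_poly_trig // /root horner_prod.
by apply/prodf_eq0; exists i => //; rewrite hornerXsubC subrr.
Qed.

Lemma eigenvalue_similar (F : fieldType) n (Q A : 'M[F]_n) a :
  Q \in unitmx -> eigenvalue (Q *m A *m invmx Q) a -> eigenvalue A a.
Proof.
move=> Qu; rewrite -conjumx //; apply: eigenvalue_conjmx.
  exact: stablemx_unit.
by rewrite row_free_unit.
Qed.

Lemma trig_similar (C : numClosedFieldType) n (A : 'M[C]_n) : (0 < n)%N ->
  exists2 Q, Q \in unitmx & is_trig_mx (Q *m A *m invmx Q).
Proof.
move=> n_gt0; have [Q /unitarymx_unit Qu Atrig] := Schur A n_gt0.
by exists Q; rewrite // -conjumx.
Qed.

Section Lyapunov.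
Variable R : realType.
Local Notation C := R[i].
Local Notation "x %:C" := (real_complex R x).
Local Notation cplx := (map_mx (real_complex R)).
Local Notation "A ^H" := (map_mx conjc A)^T (format "A ^H").
Local Notation Re := (@complex.Re R).
Local Notation Im := (@complex.Im R).

Definition sqnormc (z : C) : R := Re z ^+ 2 + Im z ^+ 2.

Lemma sqnormc_ge0 z : 0 <= sqnormc z.
Proof. by rewrite addr_ge0 ?sqr_ge0. Qed.

Lemma sqnormc_gt0 z : z != 0 -> 0 < sqnormc z.
Proof.
case: z => a b z_neq0; rewrite /sqnormc /=.
have [a0|a_neq0] := eqVneq a 0; last by rewrite ltr_wpDr ?sqr_ge0 ?exprn_even_gt0.
rewrite a0 expr0n add0r exprn_even_gt0 //.
by apply: contraNneq z_neq0 => b0; rewrite a0 b0.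
Qed.

Lemma trmxC_mul p q r (A : 'M[C]_(p, q)) (B : 'M[C]_(q, r)) :
  (A *m B)^H = B^H *m A^H.
Proof. by rewrite map_mxM trmx_mul. Qed.

Lemma trmxCK p q (A : 'M[C]_(p, q)) : (A^H)^H = A.
Proof. by apply/matrixP => i j; rewrite !mxE conjcK. Qed.

Lemma trmxC_real p q (A : 'M[R]_(p, q)) : (cplx A)^H = cplx A^T.
Proof. by apply/matrixP => i j; rewrite !mxE conjc_real. Qed.

Lemma map_Re_real_mul p q r s
    (A : 'M[R]_(p, q)) (H : 'M[C]_(q, r)) (B : 'M[R]_(r, s)) :
  map_mx Re (cplx A *m H *m cplx B) = A *m map_mx Re H *m B.
Proof.
apply/matrixP => i j; rewrite !mxE raddf_sum; apply: eq_bigr => k _.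
rewrite !mxE !mulr_suml raddf_sum; apply: eq_bigr => l _.
by rewrite !mxE; case: (H l k) => a b /=; ring.
Qed.

Lemma hermitian_Re_sym n (H : 'M[C]_n) :
  H^H = H -> (map_mx Re H)^T = map_mx Re H.
Proof.
by move=> HH; apply/matrixP => i j; rewrite !mxE -{1}HH !mxE; case: (H i j).
Qed.

Definition hform n (A : 'M[C]_n) (u : 'rV[C]_n) : R :=
  Re ((u *m A *m u^H) 0 0).

Definition dissipative n (A : 'M[C]_n) : Prop :=
  forall u : 'rV[C]_n, u != 0 -> hform A u < 0.

Lemma hform_real n (G : 'M[R]_n) (u : 'rV[C]_n) :
  hform (cplx G) u =
  (map_mx Re u *m G *m (map_mx Re u)^T) 0 0 +
  (map_mx Im u *m G *m (map_mx Im u)^T) 0 0.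
Proof.
rewrite /hform !mxE raddf_sum -big_split; apply: eq_bigr => j _ /=.
rewrite !mxE !mulr_suml raddf_sum -big_split; apply: eq_bigr => k _ /=.
by rewrite !mxE; case: (u 0 k) => a b; case: (u 0 j) => c d /=; ring.
Qed.

Lemma hform_real_gt0 n (G : 'M[R]_n) (u : 'rV[C]_n) :
  (forall a : 'rV_n, a != 0 -> 0 < (a *m G *m a^T) 0 0) ->
  u != 0 -> 0 < hform (cplx G) u.
Proof.
move=> Gpos u_neq0; have Gnneg (a : 'rV_n) : 0 <= (a *m G *m a^T) 0 0.
  have [->|a_neq0] := eqVneq a 0; first by rewrite !mul0mx mxE.
  exact: ltW (Gpos a a_neq0).
rewrite hform_real; have [ReU0|ReU_neq0] := eqVneq (map_mx Re u) 0; last first.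
  by rewrite ltr_wpDr ?Gpos.
rewrite ltr_wpDl // Gpos //; apply: contraNneq u_neq0 => ImU0.
apply/eqP/matrixP => i j.
move/matrixP: ReU0 => /(_ i j); move/matrixP: ImU0 => /(_ i j).
by rewrite !mxE; case: (u i j) => a b /= -> ->.
Qed.

Lemma hform1_gt0 n (u : 'rV[C]_n) : u != 0 -> 0 < hform 1%:M u.
Proof.
rewrite -(map_mx1 (real_complex R)); apply: hform_real_gt0 => a a_neq0.
by rewrite mulmx1 -trace_mx11 mxtrace_mul_trmx_gt0.
Qed.

Lemma lyapunov_hurwitz n (P M : 'M[R]_n) :
  posdef P -> negdef (M *m P + P *m M^T) -> hurwitz M.
Proof.
move=> Ppos Nneg z /eigenvalueP [v vM v_neq0].
have vMt : cplx M^T *m v^H = conjc z *: v^H.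
  by rewrite -trmxC_real -trmxC_mul vM map_mxZ linearZ.
have eigen_form :
    hform (cplx (M *m P + P *m M^T)) v = 2 * Re z * hform (cplx P) v.
  rewrite /hform map_mxD !map_mxM mulmxDr mulmxDl !mulmxA vM -!mulmxA vMt.
  rewrite -scalemxAl -!scalemxAr -scalerDl mxE.
  by move: (_ 0 0) => w; case: {vM vMt} z w => [a b] [c d] /=; ring.
have := hform_real_gt0 (posdef_row_gt0 Ppos) v_neq0.
have /hform_real_gt0 /(_ v_neq0) : forall a : 'rV_n, a != 0 ->
    0 < (a *m - (M *m P + P *m M^T) *m a^T) 0 0.
  by move=> a /(negdef_row_lt0 Nneg); rewrite mulmxN mulNmx !mxE oppr_gt0.
rewrite map_mxN /hform mulmxN mulNmx mxE raddfN /= -/(hform _ _) eigen_form.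
nra.
Qed.

Lemma hurwitz_trig_similar n (M : 'M[R]_n) : (0 < n)%N -> hurwitz M ->
  exists2 Q, Q \in unitmx &
    is_trig_mx (Q *m cplx M *m invmx Q) /\
    forall i, Re ((Q *m cplx M *m invmx Q) i i) < 0.
Proof.
move=> n_gt0 Mhur; have [Q Qu Ttrig] := trig_similar (cplx M) n_gt0.
exists Q => //; split=> // i.
exact/Mhur/(eigenvalue_similar Qu)/eigenvalue_trig_diag.
Qed.

Lemma hurwitz_trace_lt0 n (M : 'M[R]_n) : (0 < n)%N -> hurwitz M -> \tr M < 0.
Proof.
move=> n_gt0 /(hurwitz_trig_similar n_gt0) [Q Qu [_ Tdiag]].
have -> : \tr M = Re (\tr (Q *m cplx M *m invmx Q)).
  by rewrite mxtrace_mulC mulmxA mulVmx // mul1mx trace_map_mx.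
rewrite /mxtrace raddf_sum.
apply: (@lt_le_trans _ _ (\sum_(i < n) 0)); last by rewrite big1.
apply: ltr_sum => [|i _]; last exact: Tdiag.
by apply/hasP; exists (Ordinal n_gt0); rewrite ?mem_index_enum.
Qed.

Definition l1normc (z : C) : R := `|Re z| + `|Im z|.

Lemma l1normc_ge0 z : 0 <= l1normc z.
Proof. by rewrite addr_ge0. Qed.

(* AM-GM on each of the two real bilinear forms making up the real part *)
Lemma Re_mul_conj_le (a w b : C) :
  Re (a * w * conjc b) <= l1normc w * ((sqnormc a + sqnormc b) / 2).
Proof.
case: a w b => [a1 a2] [p q] [b1 b2]; rewrite /l1normc /sqnormc /=.
set s := (_ / 2).
have bound (c d : R) : `|d| <= s -> c * d <= `|c| * s.
  by move=> ds; rewrite (le_trans (ler_norm _)) // normrM ler_wpM2l.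
have /bound h1 : `|a1 * b1 + a2 * b2| <= s.
  have := sqr_ge0 (a1 - b1); have := sqr_ge0 (a1 + b1).
  have := sqr_ge0 (a2 - b2); have := sqr_ge0 (a2 + b2).
  by rewrite ler_norml /s => *; apply/andP; split; lra.
have /bound h2 : `|a1 * b2 - a2 * b1| <= s.
  have := sqr_ge0 (a1 - b2); have := sqr_ge0 (a1 + b2).
  have := sqr_ge0 (a2 - b1); have := sqr_ge0 (a2 + b1).
  by rewrite ler_norml /s => *; apply/andP; split; lra.
have := h1 p; have := h2 q; rewrite mulrDl; nra.
Qed.

Lemma hformE n (A : 'M[C]_n) (u : 'rV[C]_n) :
  hform A u = \sum_i \sum_j Re (u 0 i * A i j * conjc (u 0 j)).
Proof.
rewrite /hform mxE raddf_sum exchange_big; apply: eq_bigr => j _ /=.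
by rewrite !mxE mulr_suml raddf_sum.
Qed.

Lemma scaled_trig_entry_le n (T : 'M[C]_n) (eps : R) (i j : 'I_n) a b :
  is_trig_mx T -> 0 < eps <= 1 -> i != j ->
  Re (a * ((eps ^+ i / eps ^+ j)%:C * T i j) * conjc b) <=
  eps * (l1normc (T i j) * ((sqnormc a + sqnormc b) / 2)).
Proof.
move=> /is_trig_mxP Tlow /andP [eps_gt0 eps_le1] i_neq_j.
have Re_scale (r : R) (x w y : C) :
    Re (x * (r%:C * w) * conjc y) = r * Re (x * w * conjc y).
  by case: x w y => [? ?] [? ?] [? ?] /=; ring.
have bound_ge0 : 0 <= l1normc (T i j) * ((sqnormc a + sqnormc b) / 2).
  by rewrite mulr_ge0 ?l1normc_ge0 // divr_ge0 // addr_ge0 ?sqnormc_ge0.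
have [lt_ij|lt_ji|eq_ij] := ltngtP i j;
  last by rewrite (val_inj eq_ij) eqxx in i_neq_j.
  by rewrite (Tlow _ _ lt_ij) in bound_ge0 *; rewrite !(mulr0, mul0r) mulr_ge0 // ltW.
have -> : eps ^+ i / eps ^+ j = eps ^+ (i - j).
  by rewrite -{1}(subnK (ltnW lt_ji)) exprD mulfK // expf_neq0 // gt_eqF.
rewrite Re_scale.
have pow_ge0 : 0 <= eps ^+ (i - j) by rewrite exprn_ge0 // ltW.
have pow_le_eps : eps ^+ (i - j) <= eps.
  by rewrite -(subnSK lt_ji) exprS ler_piMr ?exprn_ile1 // ltW.
exact: le_trans (ler_wpM2l pow_ge0 (Re_mul_conj_le _ _ _))
                (ler_wpM2r bound_ge0 pow_le_eps).
Qed.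

Lemma scaled_trig_dissipative n (T : 'M[C]_n) (mu eps : R) :
  is_trig_mx T -> (forall i, Re (T i i) <= - mu) -> 0 < eps <= 1 ->
  eps * \sum_i \sum_j l1normc (T i j) < mu ->
  dissipative (\matrix_(i, j) ((eps ^+ i / eps ^+ j)%:C * T i j)).
Proof.
move=> Ttrig Tdiag eps_range small u u_neq0; have /andP [eps_gt0 _] := eps_range.
set s := \sum_k sqnormc (u 0 k).
have sq_le_s k : sqnormc (u 0 k) <= s.
  by rewrite /s (bigD1 k) //= lerDl sumr_ge0 // => l _; apply: sqnormc_ge0.
have s_gt0 : 0 < s.
  have /matrix0Pn [i [k uk_neq0]] := u_neq0; rewrite (ord1 i) in uk_neq0.
  exact: lt_le_trans (sqnormc_gt0 uk_neq0) (sq_le_s k).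
pose t (i j : 'I_n) :=
  Re (u 0 i * ((eps ^+ i / eps ^+ j)%:C * T i j) * conjc (u 0 j)).
have diag i : t i i <= - mu * sqnormc (u 0 i).
  rewrite /t divff ?expf_neq0 ?gt_eqF // mul1r.
  have -> : Re (u 0 i * T i i * conjc (u 0 i)) = Re (T i i) * sqnormc (u 0 i).
    by rewrite /sqnormc; case: (u 0 i) (T i i) => [? ?] [? ?] /=; ring.
  by rewrite ler_wpM2r ?sqnormc_ge0.
have off_diag i j : i != j -> t i j <= eps * s * l1normc (T i j).
  move=> /(scaled_trig_entry_le (u 0 i) (u 0 j) Ttrig eps_range) /le_trans; apply.
  rewrite -mulrA [s * _]mulrC ler_wpM2l ?ler_wpM2l ?l1normc_ge0 ?(ltW eps_gt0) //.
  by have := sq_le_s i; have := sq_le_s j; lra.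
rewrite hformE; under eq_bigr do under eq_bigr do rewrite mxE.
apply: (@le_lt_trans _ _
  (\sum_i (- mu * sqnormc (u 0 i) + eps * s * \sum_j l1normc (T i j)))).
  apply: ler_sum => i _; rewrite (bigD1 i) //=; apply: lerD; first exact: diag.
  rewrite mulr_sumr [leRHS](bigD1 i) //=.
  rewrite ler_wpDl ?mulr_ge0 ?l1normc_ge0 ?(ltW eps_gt0) ?(ltW s_gt0) //.
  by apply: ler_sum => j; rewrite eq_sym => /off_diag.
rewrite big_split /= -!mulr_sumr -/s; nra.
Qed.

Lemma trig_similar_dissipative n (T : 'M[C]_n) :
  is_trig_mx T -> (forall i, Re (T i i) < 0) ->
  exists2 D, D \in unitmx & dissipative (D *m T *m invmx D).
Proof.
move=> Ttrig Tdiag.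
set mu := - \big[Order.max/-1]_i Re (T i i).
have Tdiag_le i : Re (T i i) <= - mu by rewrite opprK le_bigmax.
have mu_gt0 : 0 < mu by rewrite oppr_gt0 bigmax_lt ?ltrN10.
set tau := \sum_i \sum_j l1normc (T i j).
have tau_ge0 : 0 <= tau by do 2!apply: sumr_ge0 => ? _; apply: l1normc_ge0.
(* any [eps] in (0, 1] with [eps * tau < mu] would do *)
set eps := mu / (1 + tau + mu).
have eps_gt0 : 0 < eps by rewrite divr_gt0 //; lra.
have eps_le1 : eps <= 1 by rewrite ler_pdivrMr; lra.
have eps_small : eps * tau < mu by rewrite mulrAC ltr_pdivrMr; nra.
have eps_neq0 k : eps ^+ k != 0 by rewrite expf_neq0 // gt_eqF.
pose D := diag_mx (\row_(i < n) (eps ^+ i)%:C).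
have D_unit : D \in unitmx.
  rewrite unitmxE det_diag unitfE; apply/prodf_neq0 => i _.
  by rewrite mxE fmorph_eq0.
exists D => //.
have -> : D *m T *m invmx D = \matrix_(i, j) ((eps ^+ i / eps ^+ j)%:C * T i j).
  apply: (canLR (mulmxK D_unit)); rewrite mul_diag_mx mul_mx_diag.
  by apply/matrixP => i j; rewrite !mxE mulrAC -rmorphM divfK.
by apply: scaled_trig_dissipative => //; apply/andP.
Qed.

Lemma dissipative_similar_lyapunov n (M : 'M[R]_n) (F T : 'M[C]_n) :
  F \in unitmx -> F *m cplx M = T *m F -> dissipative T ->
  exists2 P, posdef P & negdef (M *m P + P *m M^T).
Proof.
move=> F_unit FM Tdiss; set Fi := invmx F.
set H := Fi *m Fi^H; set P := map_mx Re H.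
have Psym : P^T = P by apply: hermitian_Re_sym; rewrite trmxC_mul trmxCK.
pose u (x : 'cV[R]_n) := cplx x^T *m Fi.
have u_neq0 x : x != 0 -> u x != 0.
  apply: contraNneq => ux0; have : cplx x^T = u x *m F by rewrite mulmxKV.
  by rewrite ux0 mul0mx => /eqP; rewrite map_mx_eq0 trmx_eq0.
have uH x : (u x)^H = Fi^H *m cplx x by rewrite trmxC_mul trmxC_real trmxK.
have P_form x : (x^T *m P *m x) 0 0 = hform 1%:M (u x).
  by rewrite -map_Re_real_mul /hform mulmx1 uH !mulmxA mxE.
have MP_form x :
    (x^T *m (M *m P + P *m M^T) *m x) 0 0 = 2 * hform T (u x).
  have MFi : cplx M *m Fi = Fi *m T.
    by rewrite -[cplx M](mulKmx F_unit) FM !mulmxA mulmxK.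
  have -> : (x^T *m (M *m P + P *m M^T) *m x) 0 0 =
      2 * (x^T *m M *m P *m x) 0 0.
    have sym : x^T *m (P *m M^T) *m x = (x^T *m (M *m P) *m x)^T.
      by rewrite !trmx_mul trmxK Psym !mulmxA.
    rewrite mulmxDr mulmxDl sym -trace_mx11 mxtraceD mxtrace_tr trace_mx11.
    by rewrite !mulmxA; lra.
  rewrite -map_Re_real_mul map_mxM /hform uH.
  by rewrite /H /u !mulmxA -(mulmxA _ (cplx M)) MFi !mulmxA mxE.
exists P; first by split=> // x x_neq0; rewrite P_form hform1_gt0 ?u_neq0.
split=> [|x x_neq0]; first by rewrite raddfD /= !trmx_mul trmxK Psym addrC.
by rewrite MP_form pmulr_rlt0 ?Tdiss ?u_neq0.
Qed.

Lemma hurwitz_lyapunov n (M : 'M[R]_n) : (0 < n)%N -> hurwitz M ->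
  exists2 P, posdef P & negdef (M *m P + P *m M^T).
Proof.
move=> n_gt0 /(hurwitz_trig_similar n_gt0) [Q Q_unit [Ttrig Tdiag]].
have [D D_unit Tdiss] := trig_similar_dissipative Ttrig Tdiag.
apply: (@dissipative_similar_lyapunov _ _ (D *m Q) _ _ _ Tdiss).
  by rewrite unitmx_mul D_unit.
by rewrite !mulmxA !mulmxKV.
Qed.

End Lyapunov.

Section DataDrivenStabilization.
Variables (R : realType) (n m L : nat).
Variables (X : 'M[R]_(n, L)) (U : 'M[R]_(m, L)) (Y : 'M[R]_(n, L)).

Lemma data_closed_loop (G : 'M[R]_(L, n)) A B :
  X *m G = 1%:M -> A *m X + B *m U = Y -> A + B *m (U *m G) = Y *m G.
Proof. by move=> XG <-; rewrite mulmxDl -!mulmxA XG mulmx1. Qed.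

Lemma lmi_gain_stabilizes (theta : 'M[R]_(L, n)) :
  posdef (X *m theta) -> negdef (theta^T *m Y^T + Y *m theta) ->
  X *m (theta *m invmx (X *m theta)) = 1%:M /\
  forall A B, A *m X + B *m U = Y ->
    hurwitz (A + B *m (U *m theta *m invmx (X *m theta))).
Proof.
move XP: (X *m theta) => P Ppos Nneg.
have P_unit := posdef_unitmx Ppos; have [Psym _] := Ppos.
have XG : X *m (theta *m invmx P) = 1%:M by rewrite mulmxA XP mulmxV.
split=> // A B data; rewrite -mulmxA (data_closed_loop XG data).
apply: (lyapunov_hurwitz Ppos).
by rewrite !mulmxA mulmxKV // -{1}Psym -trmx_mul mulmxKV // trmx_mul addrC.
Qed.

Lemma stabilizing_gain_lmi (K : 'M[R]_(m, n)) A0 B0 : (0 < n)%N ->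
  A0 *m X + B0 *m U = Y ->
  (forall A B, A *m X + B *m U = Y -> hurwitz (A + B *m K)) ->
  exists theta : 'M[R]_(L, n),
    posdef (X *m theta) /\ negdef (theta^T *m Y^T + Y *m theta).
Proof.
move=> n_gt0 data0 Kstab.
have [G XG UG] : exists2 G : 'M[R]_(L, n), X *m G = 1%:M & U *m G = K.
  apply: gain_factors_through_data data0 _ => A B /Kstab.
  exact: hurwitz_trace_lt0.
have [P Ppos] := hurwitz_lyapunov n_gt0 (Kstab _ _ data0).
rewrite -UG (data_closed_loop XG data0) => Nneg.
exists (G *m P); rewrite mulmxA XG mul1mx; split=> //.
by have [Psym _] := Ppos; rewrite trmx_mul Psym -mulmxA -trmx_mul mulmxA addrC.
Qed.

End DataDrivenStabilization.

Lemma SigmaE (R : realType) (n m q L : nat)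
    (X : 'M[R]_(n, L)) (U : 'M[R]_(m, L)) (V : 'M[R]_(q, L)) (E : 'M[R]_(n, q)) (D11 : 'M[R]_L) A B :
  Sigma X U V E D11 A B <-> A *m X + B *m U = X *m D11 - E *m V.
Proof. by rewrite /Sigma; split=> [->|->]; rewrite ?addrK ?subrK. Qed.

Unset Implicit Arguments. Set Strict Implicit.

Theorem theorem2 (R : realType) (n m q L : nat)
  (X : 'M[R]_(n, L)) (U : 'M[R]_(m, L)) (V : 'M[R]_(q, L))
  (E : 'M[R]_(n, q)) (D11 : 'M[R]_L) :
  (0 < n)%N -> (0 < m)%N -> (0 < q)%N -> (0 < L)%N ->
  (exists A B, Sigma X U V E D11 A B) ->
  (informative_stab X U V E D11 <->
     exists theta : 'M[R]_(L, n),
       posdef (X *m theta) /\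
       negdef (theta^T *m (X *m D11 - E *m V)^T + (X *m D11 - E *m V) *m theta))
  /\
  (forall theta : 'M[R]_(L, n),
     posdef (X *m theta) ->
     negdef (theta^T *m (X *m D11 - E *m V)^T + (X *m D11 - E *m V) *m theta) ->
     X *m (theta *m invmx (X *m theta)) = 1%:M /\
     forall A B, Sigma X U V E D11 A B ->
       hurwitz (A + B *m (U *m theta *m invmx (X *m theta)))).
Proof.
move=> n_gt0 _ _ _ [A0 [B0 /SigmaE data0]].
split; last first.
  move=> theta Ppos Nneg; have [XG stab] := lmi_gain_stabilizes U Ppos Nneg.
  by split=> // A B /SigmaE /stab.
split=> [[K Kstab] | [theta [Ppos Nneg]]].
  apply: stabilizing_gain_lmi n_gt0 data0 _ => A B data.
  by apply: Kstab; apply/SigmaE.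
exists (U *m theta *m invmx (X *m theta)) => A B /SigmaE.
exact: (lmi_gain_stabilizes U Ppos Nneg).2.
Qed.
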